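(* Let $\pi$ be a two-stack sortable permutation and $D(\pi)=(\pi_1,\pi_2)$. Then either $\pi=C_1(\pi_1,\pi_2)$, or $\pi=C_2(\pi_1,\pi_2,i)$ for some $1\le i\le\operatorname{slmax}(\pi_2)$.
   Context: For a finite sequence $A$ of distinct integers, the stack-sorting operator $\mathcal{S}$ is defined by $\mathcal{S}(\epsilon)=\epsilon$ for the empty sequence and, if $A$ is non-empty with largest element $m$, writing $A=A_L\cdot(m)\cdot A_R$ (concatenation), $\mathcal{S}(A)=\mathcal{S}(A_L)\cdot\mathcal{S}(A_R)\cdot(m)$. A permutation $\sigma\in\mathfrak{S}_n$, $n\ge1$, viewed as a sequence, is two-stack sortable if $\mathcal{S}(\mathcal{S}(\sigma))$ is the identity. For a sequence $A$ of distinct integers, $P(A)$ is the permutation with the same relative order as $A$ ($P(\epsilon)=\epsilon$). For a permutation $\pi$ of length $n\ge1$ written $\pi=\pi_\ell\cdot(n)\cdot\pi_r$ (parts before and after the entry $n$), $D(\pi)=(P(\pi_\ell),P(\pi_r))$. For a sequence $\tau$: $\tau^{+k}$ adds $k$ to each element; for $k_1<k_2$, $\tau^{+(k_1,m,k_2)}$ adds $k_1$ to elements strictly smaller than $m$ and $k_2$ to the others. $\operatorname{slmax}(\sigma)$ is the number of left-to-right maxima of $\mathcal{S}(\sigma)$ ($\operatorname{slmax}(\epsilon)=0$). For permutations $\pi_1\in\mathfrak{S}_k$, $\pi_2\in\mathfrak{S}_\ell$ (possibly empty), $C_1(\pi_1,\pi_2)=\pi_1\cdot(k+\ell+1)\cdot\pi_2^{+k}$;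 for non-empty $\pi_1,\pi_2$, with $a_1,\dots,a_t$ the values of the left-to-right maxima of $\mathcal{S}(\pi_2)$ in order and $1\le i\le t$, $C_2(\pi_1,\pi_2,i)=\pi_1^{+(0,k,a_i)}\cdot(k+\ell+1)\cdot\pi_2^{+(k-1,a_i+1,k)}$. *)

From mathcomp Require Import all_boot.
Set Implicit Arguments. Unset Strict Implicit. Unset Printing Implicit Defensive.

(* Stack-sorting operator S, following the recursive definition on the maximum.
   The fuel argument is the size of the sequence (each recursive call is on a
   strictly shorter sequence). *)
Fixpoint ssort_fuel (fuel : nat) (A : seq nat) : seq nat :=
  match fuel with
  | 0 => [::]
  | f.+1 =>
    match A with
    | [::] => [::]
    | _ :: _ =>
      let m := foldr maxn 0 A in
      let i := index m A in
      ssort_fuel f (take i A) ++ ssort_fuel f (drop i.+1 A) ++ [:: m]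
    end
  end.

Definition S (A : seq nat) : seq nat := ssort_fuel (size A) A.

Definition is_perm (s : seq nat) : bool := perm_eq s (iota 1 (size s)).

Definition two_stack_sortable (s : seq nat) : Prop :=
  [/\ 1 <= size s, is_perm s & S (S s) = iota 1 (size s)].

Definition P (A : seq nat) : seq nat :=
  [seq (count (fun y => y < x) A).+1 | x <- A].

Definition D (pi : seq nat) : seq nat * seq nat :=
  let n := size pi in
  let i := index n pi in
  (P (take i pi), P (drop i.+1 pi)).

Definition shift (k : nat) (t : seq nat) : seq nat := [seq x + k | x <- t].
Definition shift3 (k1 m k2 : nat) (t : seq nat) : seq nat :=
  [seq (if x < m then x + k1 else x + k2) | x <- t].

(* values of the left-to-right maxima of a sequence of positive integers *)
Fixpoint lrmax_aux (m : nat) (s : seq nat) : seq nat :=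
  match s with
  | [::] => [::]
  | x :: t => if m < x then x :: lrmax_aux x t else lrmax_aux m t
  end.
Definition lrmax (s : seq nat) : seq nat := lrmax_aux 0 s.

Definition slmax (s : seq nat) : nat := size (lrmax (S s)).

Definition C1 (p1 p2 : seq nat) : seq nat :=
  let k := size p1 in let l := size p2 in
  p1 ++ (k + l + 1) :: shift k p2.

(* C_2(π1,π2,i), i is 1-based: a_i = nth 0 (lrmax (S π2)) (i-1) *)
Definition C2 (p1 p2 : seq nat) (i : nat) : seq nat :=
  let k := size p1 in let l := size p2 in
  let a := nth 0 (lrmax (S p2)) i.-1 in
  shift3 0 k a p1 ++ (k + l + 1) :: shift3 (k - 1) (a + 1) k p2.

From mathcomp Require Import all_boot zify.
Set Implicit Arguments. Unset Strict Implicit. Unset Printing Implicit Defensive.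

(* Write pi = L n R and let M be the largest entry of L.  Stack sorting outputs
   x before y whenever some z > x lies between them, so the sortedness of
   S (S pi) forbids entries x, z, y of S pi = S L ++ S R ++ [:: n], in this
   order, with y < x < z.  With z = M this puts every entry of L other than M
   below every entry of R; the values of pi are then determined by P L, P R and
   the number a of entries of R below M, which gives C1 when a = 0 and C2
   otherwise.  With x = M it shows that in S R no entry above M precedes the
   largest entry y0 of R below M, so the rank a of y0 in R is a left-to-right
   maximum of S (P R). *)

Local Notation seqmax s := (foldr maxn 0 s).
Local Notation rank s x := (count (fun y => y < x) s).

Lemma leq_seqmax (s : seq nat) x : x \in s -> x <= seqmax s.
Proof. by elim: s => //= y s IH; rewrite in_cons => /orP[/eqP-> | /IH]; lia. Qed.

Lemma seqmax_leq (s : seq nat) m : {in s, forall x, x <= m} -> seqmax s <= m.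
Proof.
elim: s => //= y s IH le_m; rewrite geq_max le_m ?mem_head // IH // => x xs.
by rewrite le_m // in_cons xs orbT.
Qed.

Lemma seqmax_mem (s : seq nat) : s != [::] -> seqmax s \in s.
Proof.
elim: s => // y s IH _; rewrite [seqmax _]/= in_cons.
have [-> | /IH ms] := eqVneq s [::]; first by rewrite maxn0 eqxx.
by case: (leqP y (seqmax s)); rewrite ?ms ?orbT ?eqxx.
Qed.

Lemma cat_take_index_drop (T : eqType) (s : seq T) x :
  x \in s -> s = take (index x s) s ++ x :: drop (index x s).+1 s.
Proof.
by move=> xs; rewrite -{1}(cat_take_drop (index x s) s) (drop_nth x) ?index_mem ?nth_index.
Qed.

Lemma split_seqmax (w : seq nat) : w != [::] -> exists A B,
  [/\ w = A ++ seqmax w :: B, seqmax w \notin A & {in A ++ B, forall x, x <= seqmax w}].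
Proof.
move=> w0; have mw := seqmax_mem w0.
exists (take (index (seqmax w) w) w), (drop (index (seqmax w) w).+1 w); split.
- exact: cat_take_index_drop.
- by rewrite in_take // ltnn.
- by move=> x; rewrite mem_cat => /orP[/mem_take | /mem_drop] /leq_seqmax.
Qed.

Lemma subseq_cat_split (T : eqType) (s A B : seq T) : subseq s (A ++ B) ->
  exists s1 s2, [/\ s = s1 ++ s2, subseq s1 A & subseq s2 B].
Proof.
case/subseqP => msk size_msk ->.
exists (mask (take (size A) msk) A), (mask (drop (size A) msk) B).
split; try exact: mask_subseq.
by rewrite -mask_cat ?cat_take_drop // size_takel // size_msk size_cat leq_addr.
Qed.

Lemma count_ltS (s : seq nat) x : rank s x.+1 = rank s x + count_mem x s.
Proof. by elim: s => //= y s ->; rewrite ltnS; case: ltngtP => /= _; lia. Qed.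

Lemma count_lt_mono (s : seq nat) x y : x \in s -> x < y -> rank s x < rank s y.
Proof.
move=> xs xy; apply: (@leq_trans (rank s x.+1)).
  have : 0 < count_mem x s by rewrite -has_count has_pred1.
  by rewrite count_ltS; lia.
by apply: sub_count => z /= /leq_trans; apply.
Qed.

Lemma count_lt_seqmax (s : seq nat) :
  uniq s -> seqmax s \in s -> rank s (seqmax s) = (size s).-1.
Proof.
move=> us ms; have := count_ltS s (seqmax s); rewrite count_uniq_mem // ms.
by rewrite (@eq_in_count _ _ predT) ?count_predT => [/= -> | x /leq_seqmax]; rewrite ?addn1 ?ltnS.
Qed.

Lemma count_lt_iota x m n : rank (iota m n) x = minn (x - m) n.
Proof. by elim: n m => [|n IH] m /=; [rewrite minn0 | rewrite IH; case: ltnP => /=; lia]. Qed.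

Lemma lrmax_aux_cat (s1 s2 : seq nat) m x :
  m < x -> all (fun z => z < x) s1 -> x \in lrmax_aux m (s1 ++ x :: s2).
Proof.
elim: s1 m => [|y s1 IH] m mx /=; first by rewrite mx mem_head.
by case/andP => yx s1x; case: ifP => _; rewrite ?in_cons IH ?orbT.
Qed.

Lemma ssort_fuelS f (w : seq nat) : w != [::] ->
  ssort_fuel f.+1 w = ssort_fuel f (take (index (seqmax w) w) w)
                      ++ ssort_fuel f (drop (index (seqmax w) w).+1 w) ++ [:: seqmax w].
Proof. by case: w. Qed.

Lemma ssort_fuel_irr f g (w : seq nat) :
  size w <= f -> size w <= g -> ssort_fuel f w = ssort_fuel g w.
Proof.
elim: f g w => [|f IH] [|g] [|x w] // le_f le_g; rewrite !ssort_fuelS //.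
set i := index _ _; have lt_i : i < size (x :: w) by rewrite index_mem seqmax_mem.
by congr (_ ++ _ ++ _); apply: IH; rewrite ?size_drop ?size_takel ?(ltnW lt_i); clearbody i; lia.
Qed.

Lemma S_cat_max (A B : seq nat) m : m \notin A -> {in A ++ B, forall x, x <= m} ->
  S (A ++ m :: B) = S A ++ S B ++ [:: m].
Proof.
move=> mA le_m; have w0 : A ++ m :: B != [::] by case: A {mA le_m}.
have max_w : seqmax (A ++ m :: B) = m.
  apply/eqP; rewrite eqn_leq leq_seqmax ?mem_cat ?mem_head ?orbT // andbT.
  apply: seqmax_leq => x; rewrite mem_cat in_cons orbCA => /orP[/eqP-> // | xAB].
  by rewrite le_m // mem_cat.
have index_m : index m (A ++ m :: B) = size A.
  by rewrite index_cat (negbTE mA) /= eqxx addn0.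
have drop_m : drop (size A).+1 (A ++ m :: B) = B.
  by rewrite -cat_rcons drop_size_cat ?size_rcons.
rewrite /S size_cat /= addnS ssort_fuelS // max_w index_m take_size_cat // drop_m.
by congr (_ ++ _ ++ _); apply: ssort_fuel_irr; lia.
Qed.

Lemma S_ind (Q : seq nat -> Prop) : Q [::] ->
  (forall A m B, m \notin A -> {in A ++ B, forall x, x <= m} -> Q A -> Q B -> Q (A ++ m :: B)) ->
  forall w, Q w.
Proof.
move=> Q0 Qcat w; elim: {w}(size w) {-2}w (leqnn (size w)) => [|N IH] w.
  by rewrite leqn0 => /nilP->.
have [-> // | w0 le_w] := eqVneq w [::].
have [A [B [Ew mA le_m]]] := split_seqmax w0.
have : size A + size B < N.+1 by move: le_w; rewrite {1}Ew size_cat /=; lia.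
by rewrite {}Ew => lt_AB; apply: Qcat => //; apply: IH; lia.
Qed.

Lemma perm_S (w : seq nat) : perm_eq (S w) w.
Proof.
elim/S_ind: w => // A m B mA le_m pA pB; rewrite S_cat_max //.
by apply: perm_trans (perm_cat pA (perm_cat pB (perm_refl [:: m]))) _; rewrite perm_cat2l perm_catC.
Qed.

Lemma mem_S (w : seq nat) : S w =i w.
Proof. exact: perm_mem (perm_S w). Qed.

Lemma S_map (f : nat -> nat) (w : seq nat) :
  {in w &, {homo f : x y / x < y}} -> S (map f w) = map f (S w).
Proof.
move: f; elim/S_ind: w => // A m B mA le_m IHA IHB f f_homo.
have sub_AB : {subset A ++ B <= A ++ m :: B}.
  by move=> x; rewrite !mem_cat in_cons => /orP[] ->; rewrite ?orbT.
have f_lt x : x \in A ++ B -> x < m -> f x < f m.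
  by move=> xAB; apply: f_homo; [exact: sub_AB | rewrite mem_cat mem_head orbT].
have f_notin : f m \notin map f A.
  apply/mapP => -[x xA /esym fxm].
  have xm : x < m by rewrite ltn_neqAle le_m ?mem_cat ?xA // andbT; apply: contraNneq mA => <-.
  by have := f_lt x; rewrite mem_cat xA fxm ltnn => /(_ isT xm).
have f_le : {in map f A ++ map f B, forall y, y <= f m}.
  move=> y; rewrite -map_cat => /mapP[x xAB ->].
  by have := le_m x xAB; rewrite leq_eqVlt => /orP[/eqP-> // | /(f_lt x xAB)/ltnW].
have homo_sub (C : seq nat) : {subset C <= A ++ B} -> {in C &, {homo f : x y / x < y}}.
  by move=> sub_C; apply: sub_in2 f_homo => x /sub_C; apply: sub_AB.
rewrite map_cat /= !S_cat_max // !map_cat IHA ?IHB //; apply: homo_sub => x xC;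
  by rewrite mem_cat xC ?orbT.
Qed.

Lemma subseq_S_231 (w : seq nat) x z y :
  subseq [:: x; z; y] w -> x < z -> subseq [:: x; y] (S w).
Proof.
move: x z y; elim/S_ind: w => // A m B mA le_m IHA IHB x z y sub xz; rewrite S_cat_max //.
have across : x \in A -> y \in m :: B -> subseq [:: x; y] (S A ++ S B ++ [:: m]).
  move=> xA yB; rewrite -cat1s; apply: cat_subseq; rewrite sub1seq ?mem_cat mem_S //.
  by move: yB; rewrite in_cons mem_seq1 orbC.
have [s1 [s2 [E sA sB]]] := subseq_cat_split sub.
(* cases: how many of x, z, y the part s1 taken from A contains *)
case: s1 E sA => [|x1 [|z1 [|y1 [|? ?]]]] /= E sA.
- subst s2; have zm : z <= m.
    have le_mB : {in m :: B, forall v, v <= m}.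
      by move=> v; rewrite in_cons => /orP[/eqP-> // | vB]; rewrite le_m // mem_cat vB orbT.
    by apply/le_mB/(mem_subseq sB); rewrite !inE eqxx orbT.
  move: sB; rewrite /= ifN; last by rewrite neq_ltn (leq_trans xz zm).
  move=> /IHB /(_ xz) sub_SB; apply: subseq_trans sub_SB _.
  exact: subseq_trans (prefix_subseq _ [:: m]) (suffix_subseq _ _).
- case: E sA sB => <- <-; rewrite sub1seq => xA /mem_subseq /(_ y) yB.
  by apply: across xA (yB _); rewrite !inE eqxx orbT.
- case: E sA sB => <- <- <-; rewrite sub1seq => /mem_subseq /(_ x) xA yB.
  by apply: across (xA _) yB; rewrite mem_head.
- case: E sA => <- <- <- _ /IHA /(_ xz) sub_SA; apply: subseq_trans sub_SA _.
  exact: prefix_subseq.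
- by case: E.
Qed.

Lemma subseq_S_seqmax (w : seq nat) x :
  x \in w -> x != seqmax w -> subseq [:: x; seqmax w] (S w).
Proof.
move=> xw xm; have w0 : w != [::] by apply: contraTneq xw => ->.
have [A [B [Ew mA le_m]]] := split_seqmax w0.
rewrite [in S w]Ew S_cat_max // catA -cat1s; apply: cat_subseq; last by rewrite sub1seq mem_head.
by move: xw; rewrite sub1seq mem_cat !mem_S -mem_cat {1}Ew !mem_cat in_cons (negbTE xm).
Qed.

Section SplitAtMaximum.

Variables L R : seq nat.

Local Notation k := (size L).
Local Notation n := (size L + size R + 1).
Local Notation pi := (L ++ n :: R).
Local Notation M := (seqmax L).
Local Notation a := (rank R M).

Hypothesis pi_perm : is_perm pi.
Hypothesis SSpi_sorted : sorted ltn (S (S pi)).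

Let mem_pi x : (x \in pi) = (0 < x <= n).
Proof. by rewrite (perm_mem pi_perm) mem_iota size_cat /= add1n ltnS addnS addn1. Qed.

Let L_sub_pi : {subset L <= pi}.
Proof. by move=> x xL; rewrite mem_cat xL. Qed.

Let R_sub_pi : {subset R <= pi}.
Proof. by move=> x xR; rewrite mem_cat in_cons xR !orbT. Qed.

Let uniq_pi : uniq pi.
Proof. by rewrite (perm_uniq pi_perm) iota_uniq. Qed.

Let uniq_L : uniq L.
Proof. by move: uniq_pi; rewrite cat_uniq => /and3P[]. Qed.

Let uniq_R : uniq R.
Proof. by move: uniq_pi; rewrite cat_uniq /= => /and4P[]. Qed.

Let R_notin_L y : y \in R -> y \notin L.
Proof.
move=> yR; move: uniq_pi; rewrite cat_uniq => /and3P[_ /hasPn notin_L _].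
by apply: notin_L; rewrite in_cons yR orbT.
Qed.

Let M_in_L : 0 < M -> M \in L.
Proof. by move=> M_gt0; apply: seqmax_mem; apply: contraTneq M_gt0 => ->. Qed.

Let rank_L_M : 0 < M -> rank L M = k.-1.
Proof. by move=> M_gt0; rewrite count_lt_seqmax ?M_in_L. Qed.

Let rank_pi x : x \in pi -> rank L x + rank R x = x.-1.
Proof.
move=> xpi; move: (xpi); rewrite mem_pi => /andP[x_gt0 x_le].
have := permP pi_perm (fun z => z < x).
rewrite count_cat /= count_lt_iota size_cat /= ltnNge x_le /=; lia.
Qed.

Let S_pi : S pi = S L ++ S R ++ [:: n].
Proof.
apply: S_cat_max.
  by move: uniq_pi; rewrite cat_uniq /= negb_or => /and3P[_ /andP[]].
move=> x xLR; have : x \in pi by move: xLR; rewrite !mem_cat in_cons => /orP[] ->; rewrite ?orbT.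
by rewrite mem_pi => /andP[].
Qed.

Let no_231 x z y : subseq [:: x; z; y] (S pi) -> x < z -> x < y.
Proof.
move=> sub xz; have := subseq_sorted ltn_trans (subseq_S_231 sub xz) SSpi_sorted.
by rewrite /= andbT.
Qed.

Lemma L_lt_R x y : x \in L -> x != M -> y \in R -> x < y.
Proof.
move=> xL xM yR; apply: (@no_231 x M y); last by rewrite ltn_neqAle xM leq_seqmax.
rewrite S_pi -[[:: x; M; y]]/([:: x; M] ++ [:: y]); apply: cat_subseq.
  exact: subseq_S_seqmax.
by rewrite sub1seq mem_cat mem_S yR.
Qed.

Lemma shift3_P_L : shift3 0 k a (P L) = L.
Proof.
rewrite /shift3 /P -map_comp; apply: map_id_in => x xL /=.
have := rank_pi (L_sub_pi xL); move: (L_sub_pi xL); rewrite mem_pi => /andP[x_gt0 _].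
have [xM | xM] := eqVneq x M; first by subst x; rewrite rank_L_M //; case: ifP; lia.
have xltM : x < M by rewrite ltn_neqAle xM leq_seqmax.
have rank_R_x : rank R x = 0.
  apply/eqP; rewrite -leqn0 leqNgt -has_count; apply/hasPn => y yR /=.
  by rewrite -leqNgt ltnW ?L_lt_R.
have := count_lt_mono xL xltM; rewrite rank_L_M ?(leq_ltn_trans _ xltM) // rank_R_x.
by case: ifP; lia.
Qed.

Lemma shift3_P_R : shift3 (k - 1) (a + 1) k (P R) = R.
Proof.
rewrite /shift3 /P -map_comp; apply: map_id_in => y yR /=.
have := rank_pi (R_sub_pi yR); move: (R_sub_pi yR); rewrite mem_pi => /andP[y_gt0 _].
case: (ltngtP y M) => [yltM | Mlty | yM].
- have M_gt0 : 0 < M by apply: leq_ltn_trans yltM.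
  have -> : rank L y = k.-1.
    rewrite -rank_L_M //; apply: eq_in_count => z zL /=.
    have [-> | zM] := eqVneq z M; first by rewrite ltnn ltnNge ltnW.
    by rewrite L_lt_R // ltn_neqAle zM leq_seqmax.
  by have := count_lt_mono yR yltM; case: ifP; lia.
- have -> : rank L y = k.
    rewrite (@eq_in_count _ _ predT) ?count_predT // => z zL.
    exact: leq_ltn_trans (leq_seqmax zL) Mlty.
  have : a <= rank R y by apply: sub_count => z /= zM; apply: ltn_trans zM Mlty.
  by case: ifP; lia.
- by case/negP: (R_notin_L yR); rewrite yM M_in_L // -yM.
Qed.

Lemma S_R_low_before_high y z : y < M -> M < z -> ~~ subseq [:: z; y] (S R).
Proof.
move=> yltM Mltz; apply/negP => sub_zy.
suff : M < y by rewrite ltnNge ltnW.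
apply: (@no_231 M z y) Mltz; rewrite S_pi -[[:: M; z; y]]/([:: M] ++ [:: z; y]).
apply: cat_subseq; first by rewrite sub1seq mem_S M_in_L // (leq_ltn_trans _ yltM).
exact: subseq_trans sub_zy (prefix_subseq _ _).
Qed.

Lemma rank_in_lrmax : 0 < a -> a \in lrmax (S (P R)).
Proof.
rewrite -has_count => /hasP[y yR yltM].
set low := [seq z <- R | z < M].
have : seqmax low \in low by apply: seqmax_mem; rewrite -has_filter; apply/hasP; exists y.
rewrite mem_filter; set y0 := seqmax low => /andP[y0M y0R].
have le_y0 z : z \in R -> z < M -> z <= y0.
  by move=> zR zM; apply: leq_seqmax; rewrite mem_filter zM zR.
have a_y0 : a = (rank R y0).+1.
  have -> : a = rank R y0.+1.
    apply: eq_in_count => z zR /=; rewrite ltnS; apply/idP/idP => [zM | zy0].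
      exact: le_y0.
    exact: leq_ltn_trans zy0 y0M.
  by rewrite count_ltS count_uniq_mem // y0R addn1.
have y0SR : y0 \in S R by rewrite mem_S.
set s1 := take (index y0 (S R)) (S R).
have ESR : S R = s1 ++ y0 :: drop (index y0 (S R)).+1 (S R) := cat_take_index_drop y0SR.
have s1R z : z \in s1 -> z \in R by move/mem_take; rewrite mem_S.
have s1_lt z : z \in s1 -> z < y0.
  move=> zs1; have zy0 : z != y0 by apply: contraTneq zs1 => ->; rewrite in_take // ltnn.
  case: (ltnP z M) => [zM | Mlez]; first by rewrite ltn_neqAle zy0 le_y0 ?s1R.
  have Mltz : M < z.
    rewrite ltn_neqAle Mlez andbT; apply: contraNneq (R_notin_L (s1R z zs1)) => <-.
    by apply: M_in_L; apply: leq_ltn_trans yltM.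
  case/negP: (S_R_low_before_high y0M Mltz).
  by rewrite ESR -[[:: z; y0]]/([:: z] ++ [:: y0]); apply: cat_subseq; rewrite sub1seq ?mem_head.
have SPR : S (P R) = map (fun z => (rank R z).+1) (S R).
  by apply: S_map => u v uR _ uv; rewrite ltnS count_lt_mono.
rewrite SPR ESR map_cat /= a_y0; apply: lrmax_aux_cat => //.
by apply/allP => _ /mapP[z zs1 ->]; rewrite ltnS count_lt_mono ?s1R ?s1_lt.
Qed.

Lemma split_at_max_C1_C2 :
  pi = C1 (P L) (P R) \/
  exists i, [/\ P L != [::], P R != [::], 1 <= i <= slmax (P R) & pi = C2 (P L) (P R) i].
Proof.
rewrite /C1 /C2 /= !size_map.
have [a0 | a_gt0] := posnP a.
  left; congr (_ ++ _ :: _).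
    by rewrite -{1}shift3_P_L a0 /shift3; apply: map_id_in => x _; rewrite addn0 if_same.
  by rewrite -{1}shift3_P_R a0 /shift3 /shift /P -!map_comp; apply: eq_map => x /=.
right; exists (index a (lrmax (S (P R)))).+1; split.
- rewrite -size_eq0 size_map size_eq0; apply: contraTneq a_gt0 => ->.
  by rewrite -has_count; apply/hasPn => y; rewrite ltn0.
- by rewrite -size_eq0 size_map size_eq0; apply: contraTneq a_gt0 => ->.
- by rewrite /slmax index_mem rank_in_lrmax.
- by rewrite nth_index ?rank_in_lrmax // shift3_P_L shift3_P_R.
Qed.

End SplitAtMaximum.

Theorem proposition8 (pi : seq nat) :
  two_stack_sortable pi ->
  pi = C1 (D pi).1 (D pi).2 \/
  exists i : nat,
    [/\ (D pi).1 != [::], (D pi).2 != [::], 1 <= i <= slmax (D pi).2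
      & pi = C2 (D pi).1 (D pi).2 i].
Proof.
case=> pi_gt0 pi_perm SSpi.
have SSpi_sorted : sorted ltn (S (S pi)) by rewrite SSpi iota_ltn_sorted.
have n_in_pi : size pi \in pi by rewrite (perm_mem pi_perm) mem_iota leqnn andbT.
rewrite /D /=; set L := take _ pi; set R := drop _ pi.
have Epi : pi = L ++ size pi :: R := cat_take_index_drop n_in_pi.
have size_pi : size pi = size L + size R + 1.
  by rewrite {1}Epi size_cat /= addnS addn1.
clearbody L R; rewrite size_pi in Epi; subst pi.
exact: split_at_max_C1_C2.
Qed.
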